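(* Let $K\ge1$ and fix $a_2,\dots,a_{K+1}\ge0$. For $x\ge0$ let $G(x)=P^{(1)}_{K+1}(x,a_2,\dots,a_{K+1})$ (path $v_0,\dots,v_{K+1}$). Let $\mathcal A_\theta$ be an $L$-layer MinAgg GNN with exactly $K$ message passing layers $\ell_1<\dots<\ell_K$. If for some $k\in[K]$ and some set $D\subseteq[0,\infty)$ the map $x\mapsto h^{(\ell_k)}_{v_{k+1}}(G(x))$ is constant on $D$, then $x\mapsto h^{(L)}_{v_{K+1}}(G(x))$ is also constant on $D$.
   Context: Attributed graphs have nonnegative edge weights and node features, a self-loop of weight $0$ at each node, and $\mathcal N(v)=\{v\}\cup\{u:\{u,v\}\in E\}$. A large constant $\beta>0$ encodes ''infinite distance''. For a source $s$, $\mathrm d^{(t)}(s,v)$ is the minimal weight of a walk from $s$ to $v$ with at most $t$ edges ($\beta$ if none). $P^{(t)}_k(a_1,\dots,a_k)$: path $v_0,\dots,v_k$, edge $\{v_{i-1},v_i\}$ of weight $a_i$, features $x_{v_i}=\mathrm d^{(t)}(v_0,v_i)$; in particular $P^{(1)}_{K+1}(x,a_2,\dots)$ has $x_{v_0}=0$, $x_{v_1}=x$, $x_{v_i}=\beta$ for $i\ge2$. MinAgg GNN: for each $\ell\in[L]$, ReLU MLPs ($x^{(j)}=\sigma(W_jx^{(j-1)}+b_j)$) $f^{\mathrm{agg},(\ell)}:\mathbb R^{d_{\ell-1}+1}\to\mathbb R^d$ and $f^{\mathrm{up},(\ell)}:\mathbb R^{d+d_{\ell-1}}\to\mathbb R^{d_\ell}$,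 $d_0=d_L=1$, $d_\ell=d$ otherwise; $h^{(0)}_v=x_v$, $h^{(\ell)}_v=f^{\mathrm{up},(\ell)}\big(\min_{u\in\mathcal N(v)}f^{\mathrm{agg},(\ell)}(h^{(\ell-1)}_u\oplus x_{(u,v)})\oplus h^{(\ell-1)}_v\big)$ (coordinatewise min, $\oplus$ concatenation). Node component of $f^{\mathrm{agg},(\ell)}$: its first $d_{\ell-1}$ input coordinates. A function on $\mathbb R^n_{\ge0}$ depends on a set $S$ of coordinates if some $x\ne y$ agreeing outside $S$ have different images. Layer $\ell$ is message passing if $f^{\mathrm{agg},(\ell)}$ depends on its node component, stationary otherwise. *)

From HB Require Import structures.
From mathcomp Require Import all_boot all_order all_algebra.
From mathcomp Require Import reals.
Set Implicit Arguments. Unset Strict Implicit. Unset Printing Implicit Defensive.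
Import Order.TTheory GRing.Theory Num.Theory.
Local Open Scope ring_scope.

Section Defs.
Variable R : realType.

Definition relu n (v : 'cV[R]_n) : 'cV[R]_n := map_mx (fun t => Num.max t 0) v.

Inductive mlp : nat -> nat -> Type :=
| MLast n m of 'M[R]_(m, n) & 'cV[R]_m : mlp n m
| MCons n k m of 'M[R]_(k, n) & 'cV[R]_k & mlp k m : mlp n m.

Fixpoint mlp_eval n m (f : mlp n m) : 'cV[R]_n -> 'cV[R]_m :=
  match f in mlp n m return 'cV[R]_n -> 'cV[R]_m with
  | MLast _ _ W b => fun x => relu (W *m x + b)
  | MCons _ _ _ W b g => fun x => mlp_eval g (relu (W *m x + b))
  end.

Definition dimL (L d l : nat) : nat := if (l == 0%N) || (l == L) then 1%N else d.

(* An L-layer MinAgg GNN with hidden dimension d: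
   agg l = f^{agg,(l)} : R^{d_{l-1}+1} -> R^d,
   up  l = f^{up,(l)}  : R^{d+d_{l-1}} -> R^{d_l}   (used for l in [1, L]). *)
Record GNN := {
  gL : nat;
  gd : nat;
  agg : forall l : nat, mlp (dimL gL gd l.-1 + 1) gd;
  up  : forall l : nat, mlp (gd + dimL gL gd l.-1) (dimL gL gd l) }.

(* "f depends on a set S of coordinates" as a function on R^n_{>=0}, specialised to
   S = the node component (top block) of an input col_mx u e, e the edge coordinate. *)
Definition nonneg_vec n (v : 'cV[R]_n) : Prop := forall i, 0 <= v i 0.

Definition message_passing (N : GNN) (l : nat) : Prop :=
  exists (u u' : 'cV[R]_(dimL (gL N) (gd N) l.-1)) (e : 'cV[R]_1),
    nonneg_vec u /\ nonneg_vec u' /\ nonneg_vec e /\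
    col_mx u e <> col_mx u' e /\
    mlp_eval (agg N l) (col_mx u e) <> mlp_eval (agg N l) (col_mx u' e).

(* Attributed graph on nodes 0..n-1: symmetric irreflexive adjacency, edge weights,
   scalar node features. Self-loops (weight 0) are added by the GNN below. *)
Record AGraph := {
  gn : nat;
  gadj : nat -> nat -> bool;
  gw : nat -> nat -> R;
  gx : nat -> R }.

Definition nbrs (G : AGraph) (v : nat) : seq nat :=
  [seq u <- iota 0 (gn G) | gadj G u v].

Definition ew (G : AGraph) (u v : nat) : R := if u == v then 0 else gw G u v.

Definition vmin n (u v : 'cV[R]_n) : 'cV[R]_n := \col_i Num.min (u i 0) (v i 0).

Fixpoint hstate (N : GNN) (G : AGraph) (l : nat) : nat -> 'cV[R]_(dimL (gL N) (gd N) l) :=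
  match l return nat -> 'cV[R]_(dimL (gL N) (gd N) l) with
  | 0 => fun v => const_mx (gx G v)
  | l'.+1 =>
      let hp := hstate N G l' in
      fun v =>
        let msg u := mlp_eval (agg N l'.+1) (col_mx (hp u) (const_mx (ew G u v))) in
        mlp_eval (up N l'.+1)
          (col_mx (foldr (@vmin _) (msg v) [seq msg u | u <- nbrs G v]) (hp v))
  end.

(* The path graph P^{(1)}_{K+1}(x, a_2, ..., a_{K+1}) with nodes v_0, ..., v_{K+1}
   (encoded as 0..K+1): edge {v_{i-1}, v_i} has weight x if i = 1 and a_i otherwise;
   features x_{v_0} = 0, x_{v_1} = x, x_{v_i} = beta for i >= 2. *)
Definition pathG (K : nat) (beta x : R) (a : nat -> R) : AGraph := {|
  gn := K.+2;
  gadj := fun u v => (u.+1 == v) || (v.+1 == u);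
  gw := fun u v => let i := maxn u v in if i == 1%N then x else a i;
  gx := fun v => if v == 0%N then 0 else if v == 1%N then x else beta |}.

End Defs.

From HB Require Import structures.
From mathcomp Require Import all_boot all_order all_algebra.
From mathcomp Require Import reals.
From mathcomp Require Import zify.
Import Order.TTheory GRing.Theory Num.Theory.
Local Open Scope ring_scope.

(* Only the edge {v_0, v_1} and the features of v_0, v_1 depend on x, so at
   every node v_j with j >= 2 the inputs of the GNN are independent of x.  An
   x-dependence can travel one node further along the path only through a
   message passing layer; stationary layers ignore the neighbours' states
   (all states are nonnegative, being ReLU outputs).  Hence after layer l_i
   the states of v_{i+2}, ..., v_{K+1} do not depend on x.  If moreover the
   state of v_{k+1} after l_k is constant, the agreement front stands at
   v_{k+1} after l_k, and the K - k remaining message passing layers move it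
   only to v_{K+1}. *)

Lemma relu_nonneg (R : realType) n (v : 'cV[R]_n) : nonneg_vec (relu v).
Proof. by move=> i; rewrite mxE le_max lexx orbT. Qed.

Lemma mlp_eval_nonneg (R : realType) n m (f : mlp R n m) z :
  nonneg_vec (mlp_eval f z).
Proof. by elim: f z => [? ? W b|? ? ? W b g IH] z /=; [apply: relu_nonneg|apply: IH]. Qed.

Lemma const_mx_nonneg (R : realType) (e : R) :
  0 <= e -> nonneg_vec (const_mx e : 'cV[R]_1).
Proof. by move=> e_ge0 i; rewrite mxE. Qed.

Lemma stationary_aggE (R : realType) (N : GNN R) l
    (u u' : 'cV[R]_(dimL (gL N) (gd N) l.-1)) (e : 'cV[R]_1) :
  ~ message_passing N l -> nonneg_vec u -> nonneg_vec u' -> nonneg_vec e ->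
  mlp_eval (agg N l) (col_mx u e) = mlp_eval (agg N l) (col_mx u' e).
Proof.
move=> not_mp u_ge0 u'_ge0 e_ge0; apply/eqP/negPn/negP => neq_agg; apply: not_mp.
exists u, u', e; do 3!split=> //; split; last exact/eqP.
by move=> eq_in; rewrite eq_in eqxx in neq_agg.
Qed.

Lemma hstateS_eq (R : realType) (N : GNN R) (G1 G2 : AGraph R) l v :
  nbrs G1 v = nbrs G2 v ->
  (forall u, u \in v :: nbrs G1 v ->
    mlp_eval (agg N l.+1) (col_mx (hstate N G1 l u) (const_mx (ew G1 u v))) =
    mlp_eval (agg N l.+1) (col_mx (hstate N G2 l u) (const_mx (ew G2 u v)))) ->
  hstate N G1 l v = hstate N G2 l v ->
  hstate N G1 l.+1 v = hstate N G2 l.+1 v.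
Proof.
move=> eq_nbrs eq_msg eq_v /=; rewrite -eq_nbrs (eq_msg v (mem_head _ _)) eq_v.
congr (mlp_eval _ (col_mx (foldr _ _ _) _)).
by apply/eq_in_map => u u_nbr; apply: eq_msg; rewrite inE u_nbr orbT.
Qed.

Lemma count_mem_leq_size (T : eqType) (s t : seq T) :
  uniq t -> (count (mem s) t <= size s)%N.
Proof.
move=> t_uniq; rewrite -size_filter uniq_leq_size ?filter_uniq // => z.
by rewrite mem_filter => /andP[].
Qed.

Section PathGraph.
Set Implicit Arguments. Unset Strict Implicit.

Variables (R : realType) (K : nat) (a : nat -> R) (beta : R).

Local Notation G x := (pathG K beta x a).

Lemma mem_nbrs_pathG x u v :
  u \in nbrs (G x) v -> (u < K.+2)%N /\ ((u.+1 == v) || (v.+1 == u)).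
Proof. by rewrite /nbrs mem_filter mem_iota /= add0n => /andP[-> ->]. Qed.

Lemma ew_pathG_indep x y u v : (2 <= v)%N -> ew (G x) u v = ew (G y) u v.
Proof.
move=> v_ge2; rewrite /ew /=; case: (u == v) => //.
by have -> : (maxn u v == 1%N) = false by apply/eqP; lia.
Qed.

Lemma ew_pathG_nonneg x u v : (forall i, (2 <= i <= K.+1)%N -> 0 <= a i) ->
  (2 <= v <= K.+1)%N -> (u < K.+2)%N -> 0 <= ew (G x) u v.
Proof.
move=> a_ge0 v_range u_range; rewrite /ew /=; case: (u == v) => //.
have -> : (maxn u v == 1%N) = false by apply/eqP; lia.
by apply: a_ge0; lia.
Qed.

Lemma hstate_pathG_nonneg (N : GNN R) x l u :
  0 < beta -> 0 <= x -> nonneg_vec (hstate N (G x) l u).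
Proof.
case: l => [|l] beta_gt0 x_ge0 /=; last exact: mlp_eval_nonneg.
by move=> i; rewrite mxE /=; case: ifP => // _; case: ifP => // _; apply: ltW.
Qed.

Variables (N : GNN R) (x y : R).

Definition agree_from l c := forall j, (c <= j <= K.+1)%N ->
  hstate N (G x) l j = hstate N (G y) l j.

Lemma agree_from_ge l c c' : (c <= c')%N -> agree_from l c -> agree_from l c'.
Proof. by move=> le_cc' agree_c j j_range; apply: agree_c; lia. Qed.

Lemma agree_from0 : agree_from 0 2.
Proof.
move=> j j_range /=.
by have [-> ->] : (j == 0%N) = false /\ (j == 1%N) = false by split; apply/eqP; lia.
Qed.

Lemma agree_from_layerS l c :
  (1 <= c)%N -> agree_from l c -> agree_from l.+1 c.+1.
Proof.
move=> c_ge1 agree_c j j_range; apply: hstateS_eq => //; last by apply: agree_c; lia.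
move=> u u_in; have u_range : (c <= u <= K.+1)%N.
  by move: u_in; rewrite inE => /orP[/eqP|/mem_nbrs_pathG[? /orP[] /eqP]]; lia.
by rewrite agree_c // (ew_pathG_indep _ y) //; lia.
Qed.

Lemma agree_from_stationary_layerS l c :
  (forall i, (2 <= i <= K.+1)%N -> 0 <= a i) -> 0 < beta -> 0 <= x -> 0 <= y ->
  (2 <= c)%N -> ~ message_passing N l.+1 -> agree_from l c -> agree_from l.+1 c.
Proof.
move=> a_ge0 beta_gt0 x_ge0 y_ge0 c_ge2 not_mp agree_c j j_range.
apply: hstateS_eq => //; last by apply: agree_c; lia.
move=> u u_in; have u_range : (u < K.+2)%N.
  by move: u_in; rewrite inE => /orP[/eqP->|/mem_nbrs_pathG[]//]; lia.
rewrite (ew_pathG_indep _ y); last lia.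
apply: stationary_aggE => //; try exact: hstate_pathG_nonneg.
by apply/const_mx_nonneg/ew_pathG_nonneg => //; lia.
Qed.

Lemma agree_from_layers_count (s : seq nat) l n c :
  (forall i, (2 <= i <= K.+1)%N -> 0 <= a i) -> 0 < beta -> 0 <= x -> 0 <= y ->
  (2 <= c)%N ->
  (forall l', (l < l' <= l + n)%N -> message_passing N l' -> l' \in s) ->
  agree_from l c -> agree_from (l + n) (c + count (mem s) (iota l.+1 n)).
Proof.
move=> a_ge0 beta_gt0 x_ge0 y_ge0 c_ge2.
elim: n => [|n IH] mp_in agree_c; first by rewrite !addn0.
rewrite addnS -[n.+1]addn1 iotaD count_cat /= addn0 addnA addSn.
have agree_n := IH (fun l' l'_range => mp_in l' ltac:(lia)) agree_c.
case: ((l + n).+1 \in s) / boolP => [_|notin].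
  by rewrite addn1; apply: agree_from_layerS => //; lia.
rewrite addn0; apply: agree_from_stationary_layerS => //; first lia.
by move=> /(mp_in (l + n).+1 ltac:(lia)); rewrite (negbTE notin).
Qed.

Lemma agree_from_layers (s : seq nat) l1 l2 c :
  (forall i, (2 <= i <= K.+1)%N -> 0 <= a i) -> 0 < beta -> 0 <= x -> 0 <= y ->
  (2 <= c)%N -> (l1 <= l2)%N ->
  (forall l, (l1 < l <= l2)%N -> message_passing N l -> l \in s) ->
  agree_from l1 c -> agree_from l2 (c + size s).
Proof.
move=> a_ge0 beta_gt0 x_ge0 y_ge0 c_ge2 le_l12 mp_in agree_c.
rewrite -(subnKC le_l12).
have mp_in' l : (l1 < l <= l1 + (l2 - l1))%N -> message_passing N l -> l \in s.
  by move=> l_range; apply: mp_in; lia.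
apply: agree_from_ge (agree_from_layers_count a_ge0 beta_gt0 x_ge0 y_ge0 c_ge2 mp_in' agree_c).
by rewrite leq_add2l count_mem_leq_size ?iota_uniq.
Qed.

End PathGraph.

Theorem mainTheorem11 (R : realType) (K : nat) (a : nat -> R) (beta : R)
    (N : GNN R) (lk : nat -> nat) (k : nat) (D : R -> Prop) :
  (1 <= K)%N ->
  (forall i, (2 <= i <= K.+1)%N -> 0 <= a i) ->
  0 < beta ->
  (* l_1 < ... < l_K are exactly the message passing layers among 1..L *)
  (forall i j, (1 <= i)%N -> (i < j)%N -> (j <= K)%N -> (lk i < lk j)%N) ->
  (forall i, (1 <= i <= K)%N -> (1 <= lk i <= gL N)%N) ->
  (forall l, (1 <= l <= gL N)%N ->
     (message_passing N l <-> exists i, (1 <= i <= K)%N /\ lk i = l)) ->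
  (1 <= k <= K)%N ->
  (forall x, D x -> 0 <= x) ->
  (forall x y, D x -> D y ->
     hstate N (pathG K beta x a) (lk k) k.+1 = hstate N (pathG K beta y a) (lk k) k.+1) ->
  forall x y, D x -> D y ->
     hstate N (pathG K beta x a) (gL N) K.+1 = hstate N (pathG K beta y a) (gL N) K.+1.
Proof.
move=> _ a_ge0 beta_gt0 lk_mono lk_range mpE k_range D_ge0 D_const x y Dx Dy.
have [x_ge0 y_ge0] := (D_ge0 x Dx, D_ge0 y Dy).
have lk_leE i : (1 <= i <= K)%N -> (lk i <= lk k)%N = (i <= k)%N.
  move=> i_range; case: (ltngtP i k) => [lt_ik|lt_ki|->]; last by rewrite leqnn.
    by apply/ltnW/lk_mono => //; lia.
  by apply/negbTE; rewrite -ltnNge; apply: lk_mono; lia.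
have lk_k_range := lk_range k k_range.
have mp_lk l : (1 <= l <= gL N)%N -> message_passing N l ->
    exists2 i, (1 <= i <= K)%N & lk i = l.
  by move=> l_range /(mpE l l_range)[i [? ?]]; exists i.
have early : agree_from K a beta N x y (lk k) (2 + size (map lk (iota 1 k))).
  apply: (agree_from_layers (l1 := 0)) => //; last exact: agree_from0.
  move=> l l_range /(mp_lk l ltac:(lia))[i i_range lk_i]; apply/mapP; exists i => //.
  by rewrite mem_iota; move: (lk_leE i i_range); rewrite lk_i; lia.
have front : agree_from K a beta N x y (lk k) k.+1.
  move=> j j_range; case: (eqVneq j k.+1) => [->|ne_j]; first exact: D_const.
  by apply: early; rewrite size_map size_iota; lia.
have late : agree_from K a beta N x y (gL N) (k.+1 + size (map lk (iota k.+1 (K - k)))).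
  apply: (agree_from_layers (l1 := lk k)) => //; [lia|lia|].
  move=> l l_range /(mp_lk l ltac:(lia))[i i_range lk_i]; apply/mapP; exists i => //.
  by rewrite mem_iota; move: (lk_leE i i_range); rewrite lk_i; lia.
by apply: late; rewrite size_map size_iota; lia.
Qed.
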